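(* Let $L\ge 1$, let $\mathbf a\in\mathbb Z^L\setminus\{\mathbf 0\}$, let $\mathbf h_1,\ldots,\mathbf h_M\in\mathbb R^L\setminus\{\mathbf 0\}$ be channel states with probabilities $f_1,\ldots,f_M>0$, $\sum_m f_m=1$, and let $\bar P>0$. For $m=1,\ldots,M$ and $P\ge 0$ put $$R_m(P)=\tfrac12\log_2\frac{1+P\|\mathbf h_m\|^2}{\|\mathbf a\|^2+P\big(\|\mathbf h_m\|^2\|\mathbf a\|^2-(\mathbf h_m^T\mathbf a)^2\big)} ,$$ and consider the problem $DP1^{(s)}$: maximize $\sum_{m=1}^M f_m\max(0,R_m(P_m))$ over $P_1,\ldots,P_M$ subject to $\sum_{m=1}^M f_mP_m\le\bar P$ and $P_m\ge 0$ for all $m$. Let $\mathcal G=\{m:\|\mathbf h_m\|^2>\|\mathbf h_m\|^2\|\mathbf a\|^2-(\mathbf h_m^T\mathbf a)^2\}$ (the good set). For $\lambda>0$ define $P_m^{KKT}(\lambda)=\frac1\lambda-\frac1{\|\mathbf h_m\|^2}$ if $\mathbf h_m$ is collinear with $\mathbf a$, and otherwise $$P_m^{KKT}(\lambda)=\frac{-b_m+\sqrt{b_m^2-4d_mc_m(\lambda)}}{2d_m},$$ where $d_m=\|\mathbf h_m\|^2(\|\mathbf h_m\|^2\|\mathbf a\|^2-(\mathbf h_m^T\mathbf a)^2)$, $b_m=2\|\mathbf h_m\|^2\|\mathbf a\|^2-(\mathbf h_m^T\mathbf a)^2$, $c_m(\lambda)=\|\mathbf a\|^2-\frac{(\mathbf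 h_m^T\mathbf a)^2}{\lambda}$. Let $$\lambda_o=\min\Big\{\lambda>0\;\Big|\;R_m(P_m^{KKT}(\lambda))=R_m'(P_m^{KKT}(\lambda))\,P_m^{KKT}(\lambda)\text{ for some } m\in\mathcal G\Big\}$$ and $\bar P_o=\sum_{m\in\mathcal G}f_mP_m^{KKT}(\lambda_o)$. If $\bar P>\bar P_o$, then the optimal active set of $DP1^{(s)}$ equals $\mathcal G$, i.e., every optimal solution $(P_1^*,\ldots,P_M^* )$ satisfies $\{m: P_m^*>0\}=\mathcal G$.
   Context: Two nonzero vectors $\mathbf x_1,\mathbf x_2$ are collinear if $\mathbf x_1=c\,\mathbf x_2$ for some real $c$. The active set of a feasible solution $(P_1,\ldots,P_M)$ of $DP1^{(s)}$ is $\{m\in\{1,\ldots,M\}: P_m>0\}$; an optimal active set is the active set of an optimal solution. $R_m'$ denotes the derivative of $R_m$ in $P$. This is the symmetric power allocation policy (all $L$ users use the same power $P_m$ in state $m$) for compute-and-forward over a fading channel with unit-variance noise. *)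

From Stdlib Require Import Reals Lra ZArith ClassicalDescription.
From Coquelicot Require Import Coquelicot.
Open Scope R_scope.

Fixpoint sumR (n : nat) (F : nat -> R) : R :=
  match n with O => 0 | S k => sumR k F + F k end.

(* vectors in R^L are functions nat -> R, only indices i < L matter *)
Definition dot (L : nat) (x y : nat -> R) : R := sumR L (fun i => x i * y i).
Definition nrm2 (L : nat) (x : nat -> R) : R := dot L x x.

Definition vnonzero (L : nat) (x : nat -> R) : Prop := exists i, (i < L)%nat /\ x i <> 0.

Definition collinear (L : nat) (x1 x2 : nat -> R) : Prop :=
  exists c : R, forall i, (i < L)%nat -> x1 i = c * x2 i.

Definition log2 (x : R) : R := ln x / ln 2.

Section CF.
Variables (L : nat) (a : nat -> Z) (h : nat -> nat -> R).

Definition av : nat -> R := fun i => IZR (a i).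

Definition gap (m : nat) : R :=
  nrm2 L (h m) * nrm2 L av - (dot L (h m) av) ^ 2.

Definition Rm (m : nat) (P : R) : R :=
  / 2 * log2 ((1 + P * nrm2 L (h m)) / (nrm2 L av + P * gap m)).

Definition good (m : nat) : Prop := nrm2 L (h m) > gap m.

Definition dm (m : nat) : R := nrm2 L (h m) * gap m.
Definition bm (m : nat) : R := 2 * nrm2 L (h m) * nrm2 L av - (dot L (h m) av) ^ 2.
Definition cm (m : nat) (lam : R) : R := nrm2 L av - (dot L (h m) av) ^ 2 / lam.

Definition PKKT (m : nat) (lam : R) : R :=
  if excluded_middle_informative (collinear L (h m) av)
  then / lam - / nrm2 L (h m)
  else (- bm m + sqrt (bm m ^ 2 - 4 * dm m * cm m lam)) / (2 * dm m).

Definition lam_set (M : nat) (lam : R) : Prop :=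
  lam > 0 /\
  exists m, (m < M)%nat /\ good m /\
    Rm m (PKKT m lam) = Derive (Rm m) (PKKT m lam) * PKKT m lam.

Definition is_min_lam (M : nat) (lo : R) : Prop :=
  lam_set M lo /\ forall lam, lam_set M lam -> lo <= lam.

Definition Pbar_o (M : nat) (f : nat -> R) (lo : R) : R :=
  sumR M (fun m => if excluded_middle_informative (good m)
                   then f m * PKKT m lo else 0).

Definition objective (M : nat) (f : nat -> R) (P : nat -> R) : R :=
  sumR M (fun m => f m * Rmax 0 (Rm m (P m))).

Definition feasible (M : nat) (f : nat -> R) (Pbar : R) (P : nat -> R) : Prop :=
  sumR M (fun m => f m * P m) <= Pbar /\ forall m, (m < M)%nat -> 0 <= P m.

Definition optimal (M : nat) (f : nat -> R) (Pbar : R) (P : nat -> R) : Prop :=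
  feasible M f Pbar P /\
  forall Q, feasible M f Pbar Q -> objective M f Q <= objective M f P.

End CF.

From Stdlib Require Import Reals ZArith Lra Lia ClassicalDescription Ranalysis5.
From Coquelicot Require Import Coquelicot.
Open Scope R_scope.

(* For a good state the rate [R_m] is strictly concave on [[0, oo)], [R_m 0 <= 0], and its
   tangent at [P] meets the vertical axis above [0] once [P] is large.  If for some
   [lambda < lambda_o] the tangent at [P_m^KKT lambda] passed through or below the origin,
   the tangent intercept would vanish at some larger power, whose (smaller) multiplier
   would lie in the set minimized by [lambda_o]; so every such tangent passes strictly
   above the origin (and [P_m^KKT lambda >= 0]).  As [lambda -> 0] the total KKT power
   blows up, so by continuity some level [lambda_s < lambda_o] spends exactly [Pbar].  The
   allocation [P_m^KKT lambda_s] on the good set and [0] elsewhere is then, coordinatewise,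
   the unique contact point of [max (0, R_m)] with a line of slope [lambda_s / (2 ln 2)]
   lying above it (bad states have [R_m <= 0]), so a Lagrangian argument makes it the
   unique optimum; its active set is the good set. *)

Lemma ln_ge_1_sub_inv y : 0 < y -> 1 - / y <= ln y.
Proof.
intro Hy. pose proof (exp_ineq1_le (ln (/ y))) as E.
rewrite exp_ln, ln_Rinv in E by (try apply Rinv_0_lt_compat; lra). lra.
Qed.

Lemma continuity_pt_of_ex_derive (g : R -> R) x : ex_derive g x -> continuity_pt g x.
Proof.
intro D. apply continuity_pt_filterlim.
apply (ex_derive_continuous (K := R_AbsRing) (V := R_NormedModule)), D.
Qed.

Section Rate.
Variables H A G : R.
Hypotheses (H_pos : 0 < H) (A_ge1 : 1 <= A) (G_ge0 : 0 <= G).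

Definition rate (P : R) : R := / 2 * log2 ((1 + P * H) / (A + P * G)).

(* [price P] is the derivative of [ln ((1 + P H) / (A + P G))], i.e. [2 ln 2 R'(P)]:
   the paper's multiplier [lambda], which [P^KKT] inverts. *)
Definition price (P : R) : R := (H * A - G) / ((1 + P * H) * (A + P * G)).

Definition rate_deriv (P : R) : R := price P / (2 * ln 2).

Definition tangent_intercept (P : R) : R := rate P - rate_deriv P * P.

Lemma rate_derive P : 0 <= P -> is_derive rate P (rate_deriv P).
Proof.
intro HP. pose proof ln_lt_2.
assert (0 < 1 + P * H) by nra. assert (0 < A + P * G) by nra.
unfold rate, rate_deriv, price, log2. auto_derive.
- repeat split; try lra. apply Rdiv_lt_0_compat; lra.
- field. repeat split; lra.
Qed.

Lemma tangent_intercept_continuous P : 0 <= P -> continuity_pt tangent_intercept P.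
Proof.
intro HP. pose proof ln_lt_2.
assert (0 < 1 + P * H) by nra. assert (0 < A + P * G) by nra.
apply continuity_pt_of_ex_derive.
unfold tangent_intercept, rate, rate_deriv, price, log2. auto_derive.
repeat split; try nra. apply Rdiv_lt_0_compat; lra.
Qed.

Lemma tangent_intercept_eq P : 0 <= P ->
  tangent_intercept P =
  (ln ((1 + P * H) / (A + P * G)) - (H * A - G) * P / ((1 + P * H) * (A + P * G))) / (2 * ln 2).
Proof.
intro HP. pose proof ln_lt_2. assert (0 < 1 + P * H) by nra. assert (0 < A + P * G) by nra.
unfold tangent_intercept, rate, rate_deriv, price, log2. field. repeat split; lra.
Qed.

Lemma rate_nonpos P : 0 <= P -> 1 + P * H <= A + P * G -> rate P <= 0.
Proof.
intros HP Hle. pose proof ln_lt_2.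
assert (ln ((1 + P * H) / (A + P * G)) <= 0).
{ rewrite <- ln_1. apply ln_le; [apply Rdiv_lt_0_compat; nra|].
  apply Rle_div_l; nra. }
unfold rate, log2. assert (0 < / ln 2) by (apply Rinv_0_lt_compat; lra). nra.
Qed.

Lemma tangent_intercept_0 : tangent_intercept 0 <= 0.
Proof.
unfold tangent_intercept. rewrite Rmult_0_r, Rminus_0_r.
apply rate_nonpos; lra.
Qed.

Hypothesis G_lt_H : G < H.

Let price_num_pos : 0 < H * A - G.
Proof. nra. Qed.

Lemma price_pos P : 0 <= P -> 0 < price P.
Proof. intro. apply Rdiv_lt_0_compat; [lra|]. apply Rmult_lt_0_compat; nra. Qed.

Lemma rate_deriv_pos P : 0 <= P -> 0 < rate_deriv P.
Proof. intro. pose proof ln_lt_2. apply Rdiv_lt_0_compat; [apply price_pos|]; lra. Qed.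

Lemma price_lt x y : 0 <= x -> x < y -> price y < price x.
Proof.
intros Hx Hxy. unfold price.
assert (0 < (1 + x * H) * (A + x * G)) by (apply Rmult_lt_0_compat; nra).
assert ((1 + x * H) * (A + x * G) < (1 + y * H) * (A + y * G)).
{ assert (x * G <= y * G) by nra.
  apply Rle_lt_trans with ((1 + x * H) * (A + y * G));
    [apply Rmult_le_compat_l | apply Rmult_lt_compat_r]; nra. }
apply Rmult_lt_compat_l; [lra|]. apply Rinv_lt_contravar; [nra|lra].
Qed.

Lemma rate_lt_tangent Q x : 0 <= Q -> 0 <= x -> x <> Q ->
  rate x < rate Q + rate_deriv Q * (x - Q).
Proof.
intros HQ Hx HxQ. pose proof ln_lt_2.
assert (D : forall c, 0 <= c -> derivable_pt_lim rate c (rate_deriv c)).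
{ intros c Hc. apply is_derive_Reals, rate_derive, Hc. }
assert (Hdecr : forall u v, 0 <= u -> u < v -> rate_deriv v < rate_deriv u).
{ intros u v Hu Huv. apply Rmult_lt_compat_r; [apply Rinv_0_lt_compat; lra|]. apply price_lt; lra. }
destruct (Rlt_or_le x Q) as [HxQ'|HQx].
- destruct (MVT_cor2 rate rate_deriv x Q HxQ') as [c [E Hc]]; [intros c Hc; apply D; lra|].
  assert (rate_deriv Q < rate_deriv c) by (apply Hdecr; lra). nra.
- destruct (MVT_cor2 rate rate_deriv Q x ltac:(lra)) as [c [E Hc]]; [intros c Hc; apply D; lra|].
  assert (rate_deriv c < rate_deriv Q) by (apply Hdecr; lra). nra.
Qed.

Lemma max0_rate_lt_tangent Q x : 0 <= Q -> 0 < tangent_intercept Q -> 0 <= x -> x <> Q ->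
  Rmax 0 (rate x) < Rmax 0 (rate Q) + rate_deriv Q * (x - Q).
Proof.
intros HQ Hti Hx HxQ. unfold tangent_intercept in Hti.
pose proof (rate_deriv_pos Q HQ).
assert (0 <= rate_deriv Q * x) by (apply Rmult_le_pos; lra).
assert (0 <= rate_deriv Q * Q) by (apply Rmult_le_pos; lra).
rewrite (Rmax_right 0 (rate Q)) by lra.
apply Rmax_lub_lt; [lra|]. apply rate_lt_tangent; assumption.
Qed.

Lemma tangent_intercept_eventually_pos P0 : 0 <= P0 ->
  exists P, P0 < P /\ 0 < tangent_intercept P.
Proof.
intro HP0. pose proof ln_lt_2.
destruct (Req_dec G 0) as [G0|Gnz].
- (* [G = 0]: the logarithm exceeds [1] once [(1 + P H) / A > 3 >= e], while the
     subtracted term is [P H / (1 + P H) < 1] *)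
  exists (P0 + 3 * A / H).
  assert (0 < 3 * A / H) by (apply Rdiv_lt_0_compat; lra).
  split; [lra|]. rewrite tangent_intercept_eq by lra. apply Rdiv_lt_0_compat; [|lra].
  set (P := P0 + 3 * A / H). rewrite G0, Rmult_0_r, Rplus_0_r, Rminus_0_r.
  assert (HPH : 3 * A <= P * H) by (unfold P; field_simplify; nra).
  assert (exp 1 < (1 + P * H) / A).
  { pose proof exp_le_3. apply Rlt_div_r; [lra|]. nra. }
  assert (1 < ln ((1 + P * H) / A)).
  { rewrite <- (ln_exp 1) at 1. apply ln_increasing; [apply exp_pos|assumption]. }
  assert (H * A * P / ((1 + P * H) * A) < 1).
  { apply -> Rdiv_lt_1; [nra | apply Rmult_lt_0_compat; nra]. }
  lra.
- (* [G > 0]: with [N = 1 + P H], [D = A + P G], use [ln (N / D) >= 1 - D / N] and choose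
     [P] so that [G (N - D) > H A - G] *)
  set (s := H * A - G).
  assert (0 < s) by exact price_num_pos.
  assert (0 < s / G) by (apply Rdiv_lt_0_compat; lra).
  set (t := (A - 1 + s / G) / (H - G)).
  assert (0 < t) by (apply Rdiv_lt_0_compat; lra).
  exists (P0 + t + 1). split; [lra|].
  set (P := P0 + t + 1). rewrite tangent_intercept_eq by (unfold P; lra).
  apply Rdiv_lt_0_compat; [|lra].
  set (N := 1 + P * H). set (D := A + P * G).
  assert (HND : N - D = (P0 + 1) * (H - G) + s / G) by (unfold N, D, P, t; field; lra).
  assert (0 < D) by (unfold D, P; nra).
  assert (0 < N - D) by (rewrite HND; nra).
  assert (Hslack : s * P < D * (N - D)).
  { assert (s < G * (N - D)).
    { rewrite HND.
      replace (G * ((P0 + 1) * (H - G) + s / G)) with (G * (P0 + 1) * (H - G) + s) by (field; lra).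
      assert (0 < G * (P0 + 1) * (H - G)) by (repeat apply Rmult_lt_0_compat; lra). lra. }
    assert (0 < P) by (unfold P; lra).
    assert (s * P < G * (N - D) * P) by (apply Rmult_lt_compat_r; lra).
    assert (P * G * (N - D) <= D * (N - D)) by (apply Rmult_le_compat_r; [lra | unfold D; lra]).
    lra. }
  pose proof (ln_ge_1_sub_inv (N / D) ltac:(apply Rdiv_lt_0_compat; lra)).
  assert (1 - / (N / D) - s * P / (N * D) = (D * (N - D) - s * P) / (N * D)) by (field; lra).
  assert (0 < (D * (N - D) - s * P) / (N * D)) by (apply Rdiv_lt_0_compat; nra).
  fold s. lra.
Qed.

Lemma tangent_intercept_root_beyond P : 0 <= P -> tangent_intercept P <= 0 ->
  exists P', P <= P' /\ tangent_intercept P' = 0.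
Proof.
intros HP Hti. destruct (Req_dec (tangent_intercept P) 0) as [E|E].
- exists P. split; [lra|exact E].
- destruct (tangent_intercept_eventually_pos P HP) as [Pb [HPb Hpos]].
  destruct (IVT_interv tangent_intercept P Pb) as [z [Hz Ez]]; try lra.
  + intros. apply tangent_intercept_continuous. lra.
  + exists z. split; [lra|exact Ez].
Qed.

(* The larger root of [(1 + P H) (A + P G) = (H A - G) / lam], i.e. of [price P = lam];
   the equation is linear when [G = 0].  Since [(h^T a)^2 = H A - G], the paper's
   coefficients are [b = H A + G], [d = H G] and [c = A - (H A - G) / lam]. *)
Definition kkt_power (lam : R) : R :=
  if Req_EM_T G 0 then / lam - / H
  else (- (H * A + G) + sqrt ((H * A + G) ^ 2 - 4 * (H * G) * (A - (H * A - G) / lam)))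
       / (2 * (H * G)).

Lemma kkt_power_price P : 0 <= P -> kkt_power (price P) = P.
Proof.
intro HP. assert (0 < 1 + P * H) by nra. assert (0 < A + P * G) by nra.
unfold kkt_power, price. destruct (Req_EM_T G 0) as [G0|Gnz].
- rewrite G0 in *. field. repeat split; lra.
- assert (E : (H * A + G) ^ 2
              - 4 * (H * G) * (A - (H * A - G) / ((H * A - G) / ((1 + P * H) * (A + P * G))))
              = (H * A + G + 2 * H * G * P) ^ 2) by (field; repeat split; lra).
  rewrite E, sqrt_pow2; [field; lra|]. assert (0 <= H * G * P) by (apply Rmult_le_pos; nra). nra.
Qed.

Lemma price_kkt_power lam : 0 < lam -> 0 <= kkt_power lam -> price (kkt_power lam) = lam.
Proof.
intros Hlam HQ. unfold price.
set (Q := kkt_power lam) in *. unfold kkt_power in Q.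
destruct (Req_EM_T G 0) as [G0|Gnz].
- unfold Q. rewrite G0. field. repeat split; lra.
- set (b := H * A + G) in *. set (d := H * G) in *.
  set (disc := b ^ 2 - 4 * d * (A - (H * A - G) / lam)) in *.
  assert (Hd : 0 < d) by (unfold d; nra).
  assert (Hdisc : 0 <= disc).
  { assert (0 < (H * A - G) / lam) by (apply Rdiv_lt_0_compat; lra).
    replace disc with ((H * A - G) ^ 2 + 4 * d * ((H * A - G) / lam)) by (unfold disc, b, d; ring).
    nra. }
  set (r := sqrt disc) in *.
  assert (Hrr : r * r = disc) by (apply sqrt_sqrt, Hdisc).
  assert (HQd : 2 * d * Q = r - b) by (unfold Q; field; lra).
  assert (Hq : (1 + Q * H) * (A + Q * G) = (H * A - G) / lam).
  { apply Rmult_eq_reg_l with (4 * d); [|lra].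
    replace (4 * d * ((1 + Q * H) * (A + Q * G)))
      with ((2 * d * Q) ^ 2 + 2 * b * (2 * d * Q) + 4 * d * A) by (unfold b, d; ring).
    rewrite HQd.
    replace ((r - b) ^ 2 + 2 * b * (r - b) + 4 * d * A) with (r * r - b ^ 2 + 4 * d * A) by ring.
    rewrite Hrr. unfold disc. field. lra. }
  rewrite Hq. field. split; lra.
Qed.

Lemma kkt_power_nonneg lam : 0 < lam -> lam <= price 0 -> 0 <= kkt_power lam.
Proof.
intros Hlam Hle. unfold price in Hle.
replace ((1 + 0 * H) * (A + 0 * G)) with A in Hle by ring.
apply Rle_div_r in Hle; [|lra].
unfold kkt_power. destruct (Req_EM_T G 0) as [G0|Gnz].
- rewrite G0 in Hle. assert (lam <= H) by nra.
  assert (/ H <= / lam) by (apply Rinv_le_contravar; lra). lra.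
- assert (A <= (H * A - G) / lam) by (apply Rle_div_r; nra).
  assert (0 < H * G) by nra.
  assert (sqrt ((H * A + G) ^ 2) <= sqrt ((H * A + G) ^ 2 - 4 * (H * G) * (A - (H * A - G) / lam)))
    by (apply sqrt_le_1_alt; nra).
  rewrite sqrt_pow2 in * by nra.
  apply Rmult_le_pos; [lra|]. apply Rlt_le, Rinv_0_lt_compat. lra.
Qed.

Lemma kkt_power_unbounded K lo : 0 < lo ->
  exists eps, 0 < eps /\ eps <= lo /\ K < kkt_power eps.
Proof.
intro Hlo.
(* [price P <= (H A - G) / (P H)], so a large enough [P] has price at most [lo] *)
set (P := Rmax K 0 + (H * A - G) / (H * lo) + 1).
assert (Hq : 0 < (H * A - G) / (H * lo)) by (apply Rdiv_lt_0_compat; nra).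
assert (HK : K <= Rmax K 0) by apply Rmax_l. assert (0 <= Rmax K 0) by apply Rmax_r.
assert (HP : 0 < P) by (unfold P; lra).
exists (price P). split; [apply price_pos; lra|]. split.
- unfold price. apply Rle_div_l; [apply Rmult_lt_0_compat; nra|].
  assert (H * A - G <= P * (H * lo)) by (apply Rle_div_l; [nra | unfold P; lra]).
  assert (0 <= (1 + P * H) * (A - 1 + P * G)) by (apply Rmult_le_pos; nra).
  assert (lo * (P * H) <= lo * ((1 + P * H) * (A + P * G))) by (apply Rmult_le_compat_l; lra).
  lra.
- rewrite kkt_power_price by lra. unfold P. lra.
Qed.

Lemma kkt_power_continuous lam : 0 < lam -> continuity_pt kkt_power lam.
Proof.
intro Hlam. apply continuity_pt_of_ex_derive. unfold kkt_power.
destruct (Req_EM_T G 0) as [G0|Gnz]; auto_derive; [lra|].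
assert (0 < (H * A - G) / lam) by (apply Rdiv_lt_0_compat; lra).
assert (0 < H * G) by nra.
split; [lra|split; [|auto]].
replace ((H * A + G) ^ 2 - 4 * (H * G) * (A - (H * A - G) / lam))
  with ((H * A - G) ^ 2 + 4 * (H * G) * ((H * A - G) / lam)) by ring.
nra.
Qed.

End Rate.

Lemma sumR_ext n F G : (forall i, (i < n)%nat -> F i = G i) -> sumR n F = sumR n G.
Proof.
induction n as [|n IH]; intro E; cbn [sumR]; [reflexivity|].
rewrite IH by (intros; apply E; lia). rewrite E by lia. reflexivity.
Qed.

Lemma sumR_plus n F G : sumR n (fun i => F i + G i) = sumR n F + sumR n G.
Proof. induction n as [|n IH]; cbn [sumR]; [ring|]. rewrite IH. ring. Qed.

Lemma sumR_minus n F G : sumR n (fun i => F i - G i) = sumR n F - sumR n G.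
Proof. induction n as [|n IH]; cbn [sumR]; [ring|]. rewrite IH. ring. Qed.

Lemma sumR_scal n c F : sumR n (fun i => c * F i) = c * sumR n F.
Proof. induction n as [|n IH]; cbn [sumR]; [ring|]. rewrite IH. ring. Qed.

Lemma sumR_le n F G : (forall i, (i < n)%nat -> F i <= G i) -> sumR n F <= sumR n G.
Proof.
induction n as [|n IH]; intro Hle; cbn [sumR]; [lra|].
assert (F n <= G n) by (apply Hle; lia).
assert (sumR n F <= sumR n G) by (apply IH; intros; apply Hle; lia). lra.
Qed.

Lemma sumR_lt n F G j : (forall i, (i < n)%nat -> F i <= G i) -> (j < n)%nat -> F j < G j ->
  sumR n F < sumR n G.
Proof.
induction n as [|n IH]; intros Hle Hj Hlt; [lia|cbn [sumR]].
destruct (Nat.eq_dec j n) as [->|Hne].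
- assert (sumR n F <= sumR n G) by (apply sumR_le; intros; apply Hle; lia). lra.
- assert (sumR n F < sumR n G) by (apply IH; [intros; apply Hle|..]; lia || assumption).
  assert (F n <= G n) by (apply Hle; lia). lra.
Qed.

Lemma sumR_nonneg n F : (forall i, (i < n)%nat -> 0 <= F i) -> 0 <= sumR n F.
Proof.
induction n as [|n IH]; intro Hnn; cbn [sumR]; [lra|].
assert (0 <= F n) by (apply Hnn; lia).
assert (0 <= sumR n F) by (apply IH; intros; apply Hnn; lia). lra.
Qed.

Lemma sumR_ge_term n F j : (forall i, (i < n)%nat -> 0 <= F i) -> (j < n)%nat -> F j <= sumR n F.
Proof.
induction n as [|n IH]; intros Hnn Hj; [lia|cbn [sumR]].
assert (0 <= F n) by (apply Hnn; lia).
destruct (Nat.eq_dec j n) as [->|Hne].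
- assert (0 <= sumR n F) by (apply sumR_nonneg; intros; apply Hnn; lia). lra.
- assert (F j <= sumR n F) by (apply IH; [intros; apply Hnn|]; lia). lra.
Qed.

Lemma sumR_continuous n (F : nat -> R -> R) x :
  (forall k, (k < n)%nat -> continuity_pt (F k) x) ->
  continuity_pt (fun y => sumR n (fun k => F k y)) x.
Proof.
induction n as [|n IH]; intro HF; cbn [sumR].
- apply continuity_pt_const. intros u v. reflexivity.
- apply (continuity_pt_plus (fun y => sumR n (fun k => F k y)) (F n)).
  + apply IH. intros. apply HF. lia.
  + apply HF. lia.
Qed.

Lemma lagrangian_maximizer_unique n (w : nat -> R) (g : nat -> R -> R) mu B (Q P : nat -> R) :
  (forall k, (k < n)%nat -> 0 < w k) -> 0 <= mu ->
  sumR n (fun k => w k * Q k) = B ->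
  (forall k x, (k < n)%nat -> 0 <= x -> x <> Q k -> g k x < g k (Q k) + mu * (x - Q k)) ->
  sumR n (fun k => w k * P k) <= B -> (forall k, (k < n)%nat -> 0 <= P k) ->
  sumR n (fun k => w k * g k (Q k)) <= sumR n (fun k => w k * g k (P k)) ->
  forall k, (k < n)%nat -> P k = Q k.
Proof.
intros Hw Hmu HQ Hsupp HPB HP Hopt j Hj.
destruct (Req_dec (P j) (Q j)) as [E|Hne]; [exact E|exfalso].
set (T := fun k => w k * (g k (Q k) + mu * (P k - Q k))).
assert (Hlt : sumR n (fun k => w k * g k (P k)) < sumR n T).
{ assert (Hterm : forall k, (k < n)%nat -> P k <> Q k -> w k * g k (P k) < T k).
  { intros k Hk Hne'. apply Rmult_lt_compat_l; [auto|]. apply Hsupp; auto. }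
  apply sumR_lt with j; auto.
  intros k Hk. destruct (Req_dec (P k) (Q k)) as [E|Hne'].
  - unfold T. rewrite E. lra.
  - apply Rlt_le, Hterm; auto. }
assert (HT : sumR n T = sumR n (fun k => w k * g k (Q k)) + mu * (sumR n (fun k => w k * P k) - B)).
{ rewrite <- HQ, <- sumR_minus, <- sumR_scal, <- sumR_plus.
  apply sumR_ext. intros k _. unfold T. ring. }
assert (mu * (sumR n (fun k => w k * P k) - B) <= 0).
{ assert (0 <= mu * (B - sumR n (fun k => w k * P k))) by (apply Rmult_le_pos; lra). lra. }
lra.
Qed.

Lemma nrm2_nonneg L x : 0 <= nrm2 L x.
Proof. apply sumR_nonneg. intros. nra. Qed.

Lemma nrm2_pos L x : vnonzero L x -> 0 < nrm2 L x.
Proof.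
intros [i [Hi Hx]].
assert (x i * x i <= nrm2 L x) by (apply (sumR_ge_term L (fun i => x i * x i)); auto; intros; nra).
assert (0 < x i * x i) by (apply Rsqr_pos_lt, Hx). lra.
Qed.

Lemma nrm2_av_ge1 L a : vnonzero L (av a) -> 1 <= nrm2 L (av a).
Proof.
intros [i [Hi Hx]].
assert (av a i * av a i <= nrm2 L (av a))
  by (apply (sumR_ge_term L (fun i => av a i * av a i)); auto; intros; nra).
assert (1 <= av a i * av a i).
{ unfold av in *. rewrite <- mult_IZR. apply IZR_le.
  assert (a i <> 0%Z) by (intro E; apply Hx; rewrite E; reflexivity). nia. }
lra.
Qed.

Lemma nrm2_sub_scal L x y t :
  nrm2 L (fun i => x i - t * y i) = nrm2 L x - 2 * t * dot L x y + t ^ 2 * nrm2 L y.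
Proof. unfold nrm2, dot. induction L as [|L IH]; cbn [sumR]; [ring|]. rewrite IH. ring. Qed.

Lemma lagrange_identity L x y : 0 < nrm2 L y ->
  nrm2 L x * nrm2 L y - dot L x y ^ 2 =
  nrm2 L y * nrm2 L (fun i => x i - dot L x y / nrm2 L y * y i).
Proof. intro Hy. rewrite nrm2_sub_scal. field. lra. Qed.

Lemma dot_sq_le L x y : 0 < nrm2 L y -> dot L x y ^ 2 <= nrm2 L x * nrm2 L y.
Proof.
intro Hy. pose proof (lagrange_identity L x y Hy).
pose proof (nrm2_nonneg L (fun i => x i - dot L x y / nrm2 L y * y i)). nra.
Qed.

Lemma dot_sq_lt L x y :
  0 < nrm2 L y -> ~ collinear L x y -> dot L x y ^ 2 < nrm2 L x * nrm2 L y.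
Proof.
intros Hy Hnc. pose proof (lagrange_identity L x y Hy) as E.
set (t := dot L x y / nrm2 L y) in E.
set (r := fun i => x i - t * y i) in E.
destruct (Rle_lt_dec (nrm2 L r) 0) as [Hr|Hr]; [exfalso|nra].
apply Hnc. exists t. intros i Hi.
assert (r i * r i <= nrm2 L r) by (apply (sumR_ge_term L (fun i => r i * r i)); auto; intros; nra).
assert (r i = 0) by nra. unfold r in *. lra.
Qed.

Lemma dot_sq_collinear L x y : collinear L x y -> dot L x y ^ 2 = nrm2 L x * nrm2 L y.
Proof.
intros [c Hc]. unfold nrm2, dot.
rewrite (sumR_ext L (fun i => x i * x i) (fun i => c ^ 2 * (y i * y i)))
  by (intros; rewrite Hc by auto; ring).
rewrite (sumR_ext L (fun i => x i * y i) (fun i => c * (y i * y i)))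
  by (intros; rewrite Hc by auto; ring).
rewrite !sumR_scal. ring.
Qed.

Lemma PKKT_eq_kkt_power L a h m lam : 0 < nrm2 L (av a) ->
  PKKT L a h m lam = kkt_power (nrm2 L (h m)) (nrm2 L (av a)) (gap L a h m) lam.
Proof.
intro HA. unfold PKKT, kkt_power.
destruct (excluded_middle_informative _) as [C|C]; destruct (Req_EM_T _ 0) as [G0|Gnz].
- reflexivity.
- exfalso. apply Gnz. unfold gap. rewrite dot_sq_collinear by exact C. ring.
- exfalso. pose proof (dot_sq_lt L (h m) (av a) HA C). unfold gap in G0. lra.
- unfold bm, dm, cm.
  replace (dot L (h m) (av a) ^ 2) with (nrm2 L (h m) * nrm2 L (av a) - gap L a h m)
    by (unfold gap; ring).
  replace (2 * nrm2 L (h m) * nrm2 L (av a) - (nrm2 L (h m) * nrm2 L (av a) - gap L a h m))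
    with (nrm2 L (h m) * nrm2 L (av a) + gap L a h m) by ring.
  reflexivity.
Qed.

Lemma Derive_Rm L a h m P :
  0 < nrm2 L (h m) -> 1 <= nrm2 L (av a) -> 0 <= gap L a h m -> 0 <= P ->
  Derive (Rm L a h m) P = rate_deriv (nrm2 L (h m)) (nrm2 L (av a)) (gap L a h m) P.
Proof. intros. apply is_derive_unique, rate_derive; assumption. Qed.

Section Allocation.
Variables (L M : nat) (a : nat -> Z) (h : nat -> nat -> R) (f : nat -> R) (Pbar lo : R).
Hypotheses (a_nonzero : vnonzero L (av a))
  (h_nonzero : forall m, (m < M)%nat -> vnonzero L (h m))
  (f_pos : forall m, (m < M)%nat -> f m > 0)
  (lo_min : is_min_lam L a h M lo)
  (Pbar_gt : Pbar > Pbar_o L a h M f lo).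

Local Notation Hn k := (nrm2 L (h k)).
Local Notation An := (nrm2 L (av a)).
Local Notation Gn k := (gap L a h k).

Let An_ge1 : 1 <= An.
Proof. exact (nrm2_av_ge1 L a a_nonzero). Qed.

Let Hn_pos k : (k < M)%nat -> 0 < Hn k.
Proof. intro Hk. exact (nrm2_pos L (h k) (h_nonzero k Hk)). Qed.

Let Gn_nonneg k : 0 <= Gn k.
Proof. pose proof (dot_sq_le L (h k) (av a) ltac:(lra)). unfold gap. lra. Qed.

Let lo_pos : 0 < lo.
Proof. apply lo_min. Qed.

Lemma lam_set_price k P : (k < M)%nat -> good L a h k -> 0 <= P ->
  tangent_intercept (Hn k) An (Gn k) P = 0 -> lam_set L a h M (price (Hn k) An (Gn k) P).
Proof.
intros Hk Hg HP Hti. pose proof (Hn_pos k Hk).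
split; [apply price_pos; auto|].
exists k. split; [exact Hk|]. split; [exact Hg|].
rewrite PKKT_eq_kkt_power, kkt_power_price by (auto; lra).
rewrite Derive_Rm by auto.
unfold tangent_intercept in Hti. exact (Rminus_diag_uniq _ _ Hti).
Qed.

(* Past [P] the tangent intercept has a root [P'], whose price lies in [lam_set];
   and [price] is decreasing. *)
Lemma lo_le_price k P : (k < M)%nat -> good L a h k -> 0 <= P ->
  tangent_intercept (Hn k) An (Gn k) P <= 0 -> lo <= price (Hn k) An (Gn k) P.
Proof.
intros Hk Hg HP Hti. pose proof (Hn_pos k Hk).
destruct (tangent_intercept_root_beyond (Hn k) An (Gn k)) with P as [P' [HPP' Hroot]]; auto.
assert (lo <= price (Hn k) An (Gn k) P') by (apply lo_min, lam_set_price; auto; lra).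
destruct (Req_dec P P') as [<-|Hne]; [assumption|].
assert (price (Hn k) An (Gn k) P' < price (Hn k) An (Gn k) P) by (apply price_lt; auto; lra). lra.
Qed.

Lemma PKKT_nonneg k lam : (k < M)%nat -> good L a h k -> 0 < lam -> lam <= lo ->
  0 <= PKKT L a h k lam.
Proof.
intros Hk Hg Hlam Hlo. pose proof (Hn_pos k Hk).
rewrite PKKT_eq_kkt_power by lra.
apply kkt_power_nonneg; auto. apply Rle_trans with lo; [exact Hlo|].
apply lo_le_price; auto; [lra|]. apply tangent_intercept_0; auto.
Qed.

Lemma Pbar_o_continuous lam : 0 < lam -> continuity_pt (Pbar_o L a h M f) lam.
Proof.
intro Hlam. unfold Pbar_o.
apply (sumR_continuous M (fun k l => if excluded_middle_informative (good L a h k)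
                                     then f k * PKKT L a h k l else 0)).
intros k Hk. destruct (excluded_middle_informative (good L a h k)) as [Hg|Hg].
- apply (continuity_pt_mult (fun _ => f k)); [apply continuity_pt_const; intros u v; reflexivity|].
  apply continuity_pt_ext with (kkt_power (Hn k) An (Gn k)).
  + intro l. rewrite PKKT_eq_kkt_power by lra. reflexivity.
  + apply kkt_power_continuous; auto.
- apply continuity_pt_const. intros u v. reflexivity.
Qed.

Lemma water_level : exists ls, 0 < ls < lo /\ Pbar_o L a h M f ls = Pbar.
Proof.
destruct lo_min as [[_ [m0 [Hm0 [Hg0 _]]]] _].
pose proof (Hn_pos m0 Hm0). pose proof (f_pos m0 Hm0).
destruct (kkt_power_unbounded (Hn m0) An (Gn m0)) with (Pbar / f m0) lo
  as [eps [Heps [Heps_lo Hbig]]]; auto.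
rewrite <- PKKT_eq_kkt_power in Hbig by lra.
assert (Hover : Pbar < Pbar_o L a h M f eps).
{ unfold Pbar_o.
  eapply Rlt_le_trans;
    [|apply (sumR_ge_term M (fun k => if excluded_middle_informative (good L a h k)
                                     then f k * PKKT L a h k eps else 0) m0); [|exact Hm0]].
  - cbv beta. destruct (excluded_middle_informative (good L a h m0)); [|contradiction].
    replace Pbar with (f m0 * (Pbar / f m0)) by (field; lra).
    apply Rmult_lt_compat_l; lra.
  - intros k Hk. destruct (excluded_middle_informative (good L a h k)); [|lra].
    apply Rmult_le_pos; [pose proof (f_pos k Hk); lra|]. apply PKKT_nonneg; auto. }
assert (Heps_lt : eps < lo) by (destruct (Req_dec eps lo) as [->|]; lra).
destruct (IVT_interv (fun l => Pbar - Pbar_o L a h M f l) eps lo) as [ls [Hls E]]; try lra.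
- intros l Hl. apply continuity_pt_minus; [apply continuity_pt_const; intros u v; reflexivity|].
  apply Pbar_o_continuous. lra.
- exists ls. assert (ls <> lo) by (intros ->; lra). split; lra.
Qed.

Definition kkt_allocation (lam : R) (k : nat) : R :=
  if excluded_middle_informative (good L a h k) then PKKT L a h k lam else 0.

Lemma kkt_allocation_budget lam :
  sumR M (fun k => f k * kkt_allocation lam k) = Pbar_o L a h M f lam.
Proof.
apply sumR_ext. intros k _. unfold kkt_allocation.
destruct (excluded_middle_informative (good L a h k)); ring.
Qed.

Lemma price_PKKT k lam : (k < M)%nat -> good L a h k -> 0 < lam -> lam <= lo ->
  price (Hn k) An (Gn k) (PKKT L a h k lam) = lam.
Proof.
intros Hk Hg Hlam Hlo. pose proof (Hn_pos k Hk). pose proof (PKKT_nonneg k lam Hk Hg Hlam Hlo).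
rewrite PKKT_eq_kkt_power in * by lra. apply price_kkt_power; auto.
Qed.

Lemma tangent_intercept_PKKT_pos k lam : (k < M)%nat -> good L a h k -> 0 < lam < lo ->
  0 < tangent_intercept (Hn k) An (Gn k) (PKKT L a h k lam).
Proof.
intros Hk Hg Hlam.
destruct (Rlt_or_le 0 (tangent_intercept (Hn k) An (Gn k) (PKKT L a h k lam))) as [Hpos|Hti];
  [exact Hpos|exfalso].
pose proof (lo_le_price k (PKKT L a h k lam) Hk Hg ltac:(apply PKKT_nonneg; auto; lra) Hti).
rewrite price_PKKT in * by (auto; lra). lra.
Qed.

Lemma kkt_allocation_nonneg lam k : (k < M)%nat -> 0 < lam < lo -> 0 <= kkt_allocation lam k.
Proof.
intros Hk Hlam. unfold kkt_allocation.
destruct (excluded_middle_informative (good L a h k)); [apply PKKT_nonneg; auto; lra|lra].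
Qed.

Lemma kkt_allocation_pos_iff_good lam k : (k < M)%nat -> 0 < lam < lo ->
  (kkt_allocation lam k > 0 <-> good L a h k).
Proof.
intros Hk Hlam. pose proof (Hn_pos k Hk). unfold kkt_allocation.
destruct (excluded_middle_informative (good L a h k)) as [Hg|Hg].
- split; [intros _; exact Hg|intros _].
  pose proof (PKKT_nonneg k lam Hk Hg ltac:(lra) ltac:(lra)).
  pose proof (tangent_intercept_PKKT_pos k lam Hk Hg Hlam) as Hti.
  assert (tangent_intercept (Hn k) An (Gn k) 0 <= 0) by (apply tangent_intercept_0; auto).
  destruct (Req_dec (PKKT L a h k lam) 0) as [E|]; [rewrite E in Hti|]; lra.
- split; intro; [lra|contradiction].
Qed.

(* Strict concavity for good states; for bad ones [R_m <= 0] and the allocation is [0]. *)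
Lemma kkt_allocation_supporting_line lam k x :
  (k < M)%nat -> 0 < lam < lo -> 0 <= x -> x <> kkt_allocation lam k ->
  Rmax 0 (Rm L a h k x) <
  Rmax 0 (Rm L a h k (kkt_allocation lam k)) + lam / (2 * ln 2) * (x - kkt_allocation lam k).
Proof.
intros Hk Hlam Hx Hne. pose proof (Hn_pos k Hk). pose proof ln_lt_2.
unfold kkt_allocation in *. destruct (excluded_middle_informative (good L a h k)) as [Hg|Hg].
- replace (lam / (2 * ln 2)) with (rate_deriv (Hn k) An (Gn k) (PKKT L a h k lam))
    by (unfold rate_deriv; rewrite price_PKKT by (auto; lra); reflexivity).
  apply max0_rate_lt_tangent; auto.
  + apply PKKT_nonneg; auto; lra.
  + apply tangent_intercept_PKKT_pos; auto.
- assert (Hbad : forall P, 0 <= P -> Rmax 0 (Rm L a h k P) = 0).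
  { intros P HP. apply Rmax_left. apply rate_nonpos; auto.
    unfold good in Hg. pose proof (Gn_nonneg k). nra. }
  rewrite !Hbad by lra.
  assert (0 < lam / (2 * ln 2) * x) by (apply Rmult_lt_0_compat; [apply Rdiv_lt_0_compat|]; lra).
  lra.
Qed.

End Allocation.

Theorem theorem2 (L M : nat) (a : nat -> Z) (h : nat -> nat -> R)
  (f : nat -> R) (Pbar lo : R) :
  (1 <= L)%nat ->
  vnonzero L (av a) ->
  (forall m, (m < M)%nat -> vnonzero L (h m)) ->
  (forall m, (m < M)%nat -> f m > 0) ->
  sumR M f = 1 ->
  Pbar > 0 ->
  is_min_lam L a h M lo ->
  Pbar > Pbar_o L a h M f lo ->
  forall P : nat -> R, optimal L a h M f Pbar P ->
    forall m, (m < M)%nat -> (P m > 0 <-> good L a h m).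
Proof.
intros _ Ha Hh Hf _ _ Hmin HPo P [[HPbudget HPnonneg] HPbest] m Hm.
destruct (water_level L M a h f Pbar lo Ha Hh Hf Hmin HPo) as [ls [Hls HPls]].
set (Q := kkt_allocation L a h ls).
assert (HQ_feasible : feasible M f Pbar Q).
{ split.
  - unfold Q. rewrite kkt_allocation_budget. lra.
  - intros k Hk. apply (kkt_allocation_nonneg L M a h lo Ha Hh Hmin); assumption. }
assert (HPQ : P m = Q m).
{ apply (lagrangian_maximizer_unique M f (fun k x => Rmax 0 (Rm L a h k x))
           (ls / (2 * ln 2)) Pbar Q P); auto.
  - pose proof ln_lt_2. apply Rlt_le, Rdiv_lt_0_compat; lra.
  - unfold Q. rewrite kkt_allocation_budget. exact HPls.
  - intros k x Hk Hx Hne. apply (kkt_allocation_supporting_line L M a h lo); assumption.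
  - apply HPbest, HQ_feasible. }
rewrite HPQ. apply (kkt_allocation_pos_iff_good L M a h lo); assumption.
Qed.
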